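(* Let $\alpha_0>\alpha_1>0$ and let $x_1^\circ>x_2^\circ$ be integers. Let $\mathrm{FS}_{x_1^\circ,x_2^\circ}$ denote the two-car system (continuous-time TASEP with two particles) in which the front car starts at $x_1^\circ$ and has speed $\alpha_0$, and the back car starts at $x_2^\circ$ and has speed $\alpha_1$. Let $G$ be a random variable independent of everything else with $\mathbb{P}(G=k)=(1-\alpha_1/\alpha_0)(\alpha_1/\alpha_0)^k$, $k\in\mathbb{Z}_{\ge0}$, and set $$y_1^\circ:=x_2^\circ+1+\min\bigl(G,\;x_1^\circ-x_2^\circ-1\bigr).$$ Let $\mathrm{SF}_{y_1^\circ,x_2^\circ}$ denote the two-car system in which the front car starts at the (random) position $y_1^\circ$ and has speed $\alpha_1$, and the back car starts at $x_2^\circ$ and has speed $\alpha_0$. Then the trajectory $\{x_2(t)\}_{t\in\mathbb{R}_{\ge0}}$ of the car in the back has the same distribution (as a process) in $\mathrm{FS}_{x_1^\circ,x_2^\circ}$ and in $\mathrm{SF}_{y_1^\circ,x_2^\circ}$.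
   Context: Two-car system: two particles at integer positions $x_1(t)>x_2(t)$ evolving in continuous time $t\ge0$. Each car carries an independent exponential clock whose rate is the car's speed. When a car's clock rings, the car jumps by $1$ to the right, provided the destination is not occupied by the other car; otherwise the jump is suppressed. In particular the front car performs a Poisson simple random walk with rate equal to its speed. *)

From Stdlib Require Import Reals ZArith List Bool.
From Coquelicot Require Import Coquelicot.
Open Scope R_scope.
Open Scope bool_scope.

(** State of a two-car system: (x1, x2) = (front position, back position),
    meaningful when x1 > x2. *)
Definition state : Type := (Z * Z)%type.

(** Generator (Q-matrix) of the two-car system with front speed [vf] and back
    speed [vb]: the front car jumps +1 at rate vf; the back car jumps +1 at
    rate vb unless the target site x2+1 is occupied by the front car. *)
Definition gen (vf vb : R) (s s' : state) : R :=
  let (a, b) := s in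
  let (a', b') := s' in
  (if (a' =? a + 1)%Z && (b' =? b)%Z then vf else 0)
  + (if (a' =? a)%Z && (b' =? b + 1)%Z && (b + 1 <? a)%Z then vb else 0)
  - (if (a' =? a)%Z && (b' =? b)%Z
     then vf + (if (b + 1 <? a)%Z then vb else 0) else 0).

(** Matrix powers Q^n(s,s').  Since Q(s'',s') <> 0 only for
    s'' in {(a'-1,b'), (a',b'-1), (a',b')}, the product
    Q^(n+1)(s,s') = sum_{s''} Q^n(s,s'') Q(s'',s') is this finite sum. *)
Fixpoint gen_pow (vf vb : R) (n : nat) (s s' : state) : R :=
  match n with
  | O => if (fst s =? fst s')%Z && (snd s =? snd s')%Z then 1 else 0
  | S m =>
      let (a', b') := s' in
      gen_pow vf vb m s ((a' - 1)%Z, b') * gen vf vb ((a' - 1)%Z, b') s'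
      + gen_pow vf vb m s (a', (b' - 1)%Z) * gen vf vb (a', (b' - 1)%Z) s'
      + gen_pow vf vb m s s' * gen vf vb s' s'
  end.

Definition trans (vf vb t : R) (s s' : state) : R :=
  Series (fun n => t ^ n / INR (fact n) * gen_pow vf vb n s s').

(** For l = [(d1,k1); ...; (dm,km)] with increments d_i >= 0 and
    t_i = d1 + ... + d_i,
    [back_fdd vf vb s l] = P_s( x2(t1) = k1, ..., x2(tm) = km ),
    obtained by the Markov property, summing over the (unobserved) front
    position x1(t_i) = k_i + 1 + j, j >= 0. *)
Fixpoint back_fdd (vf vb : R) (s : state) (l : list (R * Z)) : R :=
  match l with
  | nil => 1
  | (d, k) :: rest =>
      Series (fun j : nat =>
        trans vf vb d s ((k + 1 + Z.of_nat j)%Z, k)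
        * back_fdd vf vb ((k + 1 + Z.of_nat j)%Z, k) rest)
  end.

From Stdlib Require Import Reals ZArith List Bool Lia Lra.
From Coquelicot Require Import Coquelicot.
Open Scope R_scope.

(* The back car sees the front car only through the gap.  With p = α1/α0, let Λ be the kernel
   sending (x1, x2) to (x2 + 1 + min(G, x1 - x2 - 1), x2), G geometric of parameter p ([link p]).
   A direct computation using α1 = p α0 gives the intertwining Q_FS Λ = Λ Q_SF of the two
   generators on states x2 < x1, hence Q_FS^n Λ = Λ Q_SF^n.  The entries of Q^n grow at most
   geometrically, which justifies exchanging the exponential series with the sums over the
   unobserved front position; so the intertwining passes to the transition kernels.  As Λ does not
   move the back car, induction on the number of observation times then identifies the
   finite-dimensional distributions of x2(.) in both systems. *)

Ltac case_Z := repeat (match goal with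
  | |- context [Z.eqb ?x ?y] => destruct (Z.eqb_spec x y); try (exfalso; lia)
  | |- context [Z.ltb ?x ?y] => destruct (Z.ltb_spec x y); try (exfalso; lia)
  end; cbn [andb]).

Lemma sum_f_R0_lin3 c1 c2 c3 u v w N :
  sum_f_R0 (fun j => c1 * u j + c2 * v j + c3 * w j) N
  = c1 * sum_f_R0 u N + c2 * sum_f_R0 v N + c3 * sum_f_R0 w N.
Proof. induction N as [|N IH]; simpl; [ring | rewrite IH; ring]. Qed.

Lemma sum_f_R0_single (u : nat -> R) j0 N :
  sum_f_R0 (fun j => if (j =? j0)%nat then u j else 0) N
  = if (j0 <=? N)%nat then u j0 else 0.
Proof.
  induction N as [|N IH].
  - destruct j0; reflexivity.
  - rewrite tech5, IH.
    destruct (Nat.eqb_spec (S N) j0), (Nat.leb_spec j0 N), (Nat.leb_spec j0 (S N));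
      subst; try lia; ring.
Qed.

Lemma exp_series x : is_series (fun n => x ^ n / INR (fact n)) (exp x).
Proof.
  eapply is_series_ext; [|apply (is_exp_Reals x)].
  intro n. simpl. rewrite pow_n_pow. reflexivity.
Qed.

Lemma Rabs_exp_term_le d K B X n : Rabs X <= K ^ n * B ->
  Rabs (d ^ n / INR (fact n) * X) <= (Rabs d * K) ^ n / INR (fact n) * B.
Proof.
  intro HX. assert (Hfact : 0 < INR (fact n)) by apply INR_fact_lt_0.
  unfold Rdiv. rewrite !Rabs_mult, Rabs_inv, <- RPow_abs, Rpow_mult_distr.
  rewrite (Rabs_pos_eq (INR (fact n))) by lra.
  replace (Rabs d ^ n * K ^ n * / INR (fact n) * B)
    with (Rabs d ^ n * / INR (fact n) * (K ^ n * B)) by ring.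
  apply Rmult_le_compat_l; [|exact HX].
  apply Rmult_le_pos; [apply pow_le, Rabs_pos | left; apply Rinv_0_lt_compat, Hfact].
Qed.

Lemma ex_series_Rabs_le (x y : nat -> R) :
  (forall n, Rabs (x n) <= y n) -> ex_series y -> ex_series x.
Proof. exact (@ex_series_le R_AbsRing R_CompleteNormedModule x y). Qed.

Lemma Rabs_Series_le (x y : nat -> R) (Y : R) : (forall n, Rabs (x n) <= y n) -> is_series y Y ->
  Rabs (Series x) <= Y.
Proof.
  intros Hxy Hy.
  assert (Ey : ex_series y) by (exists Y; exact Hy).
  eapply Rle_trans; [apply Series_Rabs|].
  - apply (ex_series_Rabs_le _ y); [|exact Ey]. intro n. apply Rle_trans with (2 := Hxy n).
    apply Req_le, Rabs_Rabsolu.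
  - rewrite <- (is_series_unique y Y Hy). apply Series_le; [|exact Ey].
    intro n. split; [apply Rabs_pos | apply Hxy].
Qed.

Lemma is_series_sum_f_R0 (a : nat -> nat -> R) (l : nat -> R) N :
  (forall j, is_series (a j) (l j)) ->
  is_series (fun n => sum_f_R0 (fun j => a j n) N) (sum_f_R0 l N).
Proof.
  intro Ha. induction N as [|N IH]; [apply Ha|].
  apply (is_series_plus _ _ _ _ IH (Ha (S N))).
Qed.

Lemma Un_cv_Series_dominated (f : nat -> nat -> R) (F c : nat -> R) (J : nat) :
  ex_series c -> (forall N n, Rabs (f N n) <= c n) ->
  (forall N n, (n + J <= N)%nat -> f N n = F n) ->
  Un_cv (fun N => Series (f N)) (Series F).
Proof.
  intros Ec Hfc Hf eps Heps.
  assert (HFc : forall n, Rabs (F n) <= c n)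
    by (intro n; rewrite <- (Hf (n + J)%nat n) by lia; apply Hfc).
  assert (Ef : forall N, ex_series (f N)) by (intro N; apply (ex_series_Rabs_le _ c); auto).
  assert (EF : ex_series F) by (apply (ex_series_Rabs_le _ c); auto).
  pose proof (proj1 (is_series_Reals _ _) (Series_correct _ Ec) (eps / 2)) as [M HM]; [lra|].
  specialize (HM M (le_n M)). unfold R_dist in HM.
  assert (Etail : is_series (fun k => c (S M + k)%nat) (Series c - sum_f_R0 c M)).
  { rewrite (Series_incr_n c (S M)) by (lia || exact Ec). simpl pred.
    replace (sum_f_R0 c M + _ - sum_f_R0 c M) with (Series (fun k => c (S M + k)%nat)) by ring.
    apply Series_correct, ex_series_incr_n, Ec. }
  exists (M + J)%nat. intros N HN. unfold R_dist.
  rewrite <- Series_minus by auto.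
  set (g := fun n => f N n - F n).
  assert (Hg : forall n, Rabs (g n) <= 2 * c n).
  { intro n. unfold g. eapply Rle_trans; [apply Rabs_triang|]. rewrite Rabs_Ropp.
    pose proof (Hfc N n); pose proof (HFc n); lra. }
  assert (Eg : ex_series g).
  { apply (ex_series_Rabs_le _ (fun n => 2 * c n)); [exact Hg|].
    exists (2 * Series c). exact (is_series_scal_l 2 c _ (Series_correct _ Ec)). }
  rewrite (Series_incr_n g (S M)) by (lia || exact Eg). simpl pred.
  rewrite sum_eq_R0, Rplus_0_l by (intros n Hn; unfold g; rewrite Hf by lia; ring).
  apply Rle_lt_trans with (2 * (Series c - sum_f_R0 c M)).
  - apply (Rabs_Series_le _ (fun k => 2 * c (S M + k)%nat)); [intro; apply Hg|].
    exact (is_series_scal_l 2 _ _ Etail).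
  - rewrite Rabs_minus_sym in HM. apply Rabs_def2 in HM as [HM _]. lra.
Qed.

Section Generator.

Variables vf vb : R.

Definition gen_op (f : state -> R) (s : state) : R :=
  let (a, b) := s in
  gen vf vb s ((a + 1)%Z, b) * f ((a + 1)%Z, b)
  + gen vf vb s (a, (b + 1)%Z) * f (a, (b + 1)%Z) + gen vf vb s s * f s.

Lemma gen_op_explicit f a b :
  gen_op f (a, b) = vf * (f ((a + 1)%Z, b) - f (a, b))
    + (if (b + 1 <? a)%Z then vb * (f (a, (b + 1)%Z) - f (a, b)) else 0).
Proof. unfold gen_op, gen. case_Z; ring. Qed.

Lemma gen_pow_succ_l n s s' :
  gen_pow vf vb (S n) s s' = gen_op (fun u => gen_pow vf vb n u s') s.
Proof.
  revert s s'; induction n as [|n IH]; intros [a b] [a' b'].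
  - cbn [gen_op gen_pow fst snd]. case_Z; subst;
    repeat match goal with
    | |- context [(?x + 1 - 1)%Z] => replace (x + 1 - 1)%Z with x by lia
    | |- context [(?x - 1 + 1)%Z] => replace (x - 1 + 1)%Z with x by lia
    end; ring.
  - change (gen_pow vf vb (S (S n)) (a, b) (a', b')) with
      (gen_pow vf vb (S n) (a, b) ((a' - 1)%Z, b') * gen vf vb ((a' - 1)%Z, b') (a', b')
       + gen_pow vf vb (S n) (a, b) (a', (b' - 1)%Z) * gen vf vb (a', (b' - 1)%Z) (a', b')
       + gen_pow vf vb (S n) (a, b) (a', b') * gen vf vb (a', b') (a', b')).
    rewrite !IH. unfold gen_op. cbn [gen_pow]. ring.
Qed.

Definition back_at (k : Z) (h : nat -> R) (s : state) : R :=
  if (snd s =? k)%Z && (k <? fst s)%Z then h (Z.to_nat (fst s - k - 1)) else 0.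

Definition trunc (N : nat) (h : nat -> R) (j : nat) : R := if (j <=? N)%nat then h j else 0.

Lemma sum_gen_pow_back_at k n : forall N h s,
  sum_f_R0 (fun j => gen_pow vf vb n s ((k + 1 + Z.of_nat j)%Z, k) * h j) N
  = Nat.iter n gen_op (back_at k (trunc N h)) s.
Proof.
  induction n as [|n IH]; intros N h [a b].
  - simpl Nat.iter. unfold back_at, trunc; cbn [gen_pow fst snd].
    destruct (Z.eqb_spec b k) as [-> | Hb]; cbn [andb].
    + destruct (Z.ltb_spec k a).
      * rewrite <- (sum_f_R0_single h (Z.to_nat (a - k - 1))). apply sum_eq. intros j _.
        rewrite andb_true_r. destruct (Nat.eqb_spec j (Z.to_nat (a - k - 1))); case_Z; ring.
      * apply sum_eq_R0. intros j _. case_Z; ring.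
    + apply sum_eq_R0. intros j _. rewrite andb_false_r. ring.
  - set (t := fun u j => gen_pow vf vb n u ((k + 1 + Z.of_nat j)%Z, k) * h j).
    rewrite (sum_eq _ (fun j => gen vf vb (a, b) ((a + 1)%Z, b) * t ((a + 1)%Z, b) j
      + gen vf vb (a, b) (a, (b + 1)%Z) * t (a, (b + 1)%Z) j
      + gen vf vb (a, b) (a, b) * t (a, b) j)).
    + rewrite sum_f_R0_lin3. unfold t. rewrite !IH. reflexivity.
    + intros j _. unfold t. rewrite gen_pow_succ_l. unfold gen_op. ring.
Qed.

Lemma gen_iter_local n : forall f g A,
  (forall a b, (b < a)%Z -> (a <= A)%Z -> f (a, b) = g (a, b)) ->
  forall a b, (b < a)%Z -> (a + Z.of_nat n <= A)%Z ->
  Nat.iter n gen_op f (a, b) = Nat.iter n gen_op g (a, b).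
Proof.
  induction n as [|n IH]; intros f g A Hfg a b Hab HA.
  - apply Hfg; lia.
  - rewrite !Nat.iter_succ, !gen_op_explicit, !(IH f g A Hfg) by lia.
    destruct (Z.ltb_spec (b + 1) a); [rewrite (IH f g A Hfg a (b + 1)%Z) by lia|]; reflexivity.
Qed.

Definition gen_norm : R := 2 * (Rabs vf + Rabs vb).

Lemma gen_op_bound f B : (forall s, Rabs (f s) <= B) ->
  forall s, Rabs (gen_op f s) <= gen_norm * B.
Proof.
  intros Hf [a b]. rewrite gen_op_explicit. unfold gen_norm.
  assert (Hd : forall s s', Rabs (f s - f s') <= 2 * B).
  { intros s s'. eapply Rle_trans; [apply Rabs_triang|]. rewrite Rabs_Ropp.
    pose proof (Hf s); pose proof (Hf s'); lra. }
  assert (HB : 0 <= B) by (eapply Rle_trans; [apply Rabs_pos | apply (Hf (a, b))]).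
  assert (Hfront : Rabs (vf * (f ((a + 1)%Z, b) - f (a, b))) <= Rabs vf * (2 * B))
    by (rewrite Rabs_mult; apply Rmult_le_compat_l; [apply Rabs_pos | apply Hd]).
  assert (Hback : Rabs (if (b + 1 <? a)%Z then vb * (f (a, (b + 1)%Z) - f (a, b)) else 0)
                  <= Rabs vb * (2 * B)).
  { destruct (b + 1 <? a)%Z.
    - rewrite Rabs_mult. apply Rmult_le_compat_l; [apply Rabs_pos | apply Hd].
    - rewrite Rabs_R0. apply Rmult_le_pos; [apply Rabs_pos | lra]. }
  eapply Rle_trans; [apply Rabs_triang | lra].
Qed.

Lemma gen_iter_bound f B : (forall s, Rabs (f s) <= B) ->
  forall n s, Rabs (Nat.iter n gen_op f s) <= gen_norm ^ n * B.
Proof.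
  intros Hf n; induction n as [|n IH]; intro s.
  - simpl. rewrite Rmult_1_l. apply Hf.
  - rewrite Nat.iter_succ. simpl pow. rewrite Rmult_assoc. apply gen_op_bound, IH.
Qed.

Lemma gen_pow_bound n s s' : Rabs (gen_pow vf vb n s s') <= gen_norm ^ n.
Proof.
  revert s; induction n as [|n IH]; intro s.
  - simpl. destruct (_ && _)%bool; rewrite ?Rabs_R1, ?Rabs_R0; lra.
  - rewrite gen_pow_succ_l. apply gen_op_bound. intro u. apply IH.
Qed.

Lemma back_at_bound k h B :
  (forall j, Rabs (h j) <= B) -> forall s, Rabs (back_at k h s) <= B.
Proof.
  intros Hh s. unfold back_at. destruct (_ && _)%bool; [apply Hh|].
  rewrite Rabs_R0. eapply Rle_trans; [apply Rabs_pos | apply (Hh O)].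
Qed.

Lemma trunc_bound N h B : (forall j, Rabs (h j) <= B) -> forall j, Rabs (trunc N h j) <= B.
Proof.
  intros Hh j. unfold trunc. destruct (j <=? N)%nat; [apply Hh|].
  rewrite Rabs_R0. eapply Rle_trans; [apply Rabs_pos | apply (Hh O)].
Qed.

Lemma is_series_trans d s s' :
  is_series (fun n => d ^ n / INR (fact n) * gen_pow vf vb n s s') (trans vf vb d s s').
Proof.
  apply Series_correct, (ex_series_Rabs_le _ (fun n => (Rabs d * gen_norm) ^ n / INR (fact n) * 1)).
  - intro n. apply Rabs_exp_term_le. rewrite Rmult_1_r. apply gen_pow_bound.
  - exists (exp (Rabs d * gen_norm) * 1). exact (is_series_scal_r 1 _ _ (exp_series _)).
Qed.

Lemma sum_trans_back_at d k h s N :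
  sum_f_R0 (fun j => trans vf vb d s ((k + 1 + Z.of_nat j)%Z, k) * h j) N
  = Series (fun n => d ^ n / INR (fact n) * Nat.iter n gen_op (back_at k (trunc N h)) s).
Proof.
  symmetry. apply is_series_unique.
  eapply is_series_ext; [|apply (is_series_sum_f_R0
    (fun j n => d ^ n / INR (fact n) * gen_pow vf vb n s ((k + 1 + Z.of_nat j)%Z, k) * h j))].
  - intro n. rewrite <- sum_gen_pow_back_at, scal_sum. apply sum_eq. intros j _. ring.
  - intro j. apply is_series_scal_r, is_series_trans.
Qed.

Lemma gen_iter_back_at_trunc k h N n x1 x2 : (x2 < x1)%Z -> (n + Z.to_nat (x1 - k) <= N)%nat ->
  Nat.iter n gen_op (back_at k (trunc N h)) (x1, x2) = Nat.iter n gen_op (back_at k h) (x1, x2).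
Proof.
  intros Hx HN. apply (gen_iter_local n _ _ (k + 1 + Z.of_nat N)%Z); [|lia|lia].
  intros a b _ Ha. unfold back_at, trunc; cbn [fst snd]. case_Z; try reflexivity.
  destruct (Nat.leb_spec (Z.to_nat (a - k - 1)) N); [reflexivity | lia].
Qed.

Lemma is_series_trans_back_at d k h B x1 x2 :
  (x2 < x1)%Z -> (forall j, Rabs (h j) <= B) ->
  is_series (fun n => d ^ n / INR (fact n) * Nat.iter n gen_op (back_at k h) (x1, x2))
    (Series (fun j => trans vf vb d (x1, x2) ((k + 1 + Z.of_nat j)%Z, k) * h j)).
Proof.
  intros Hx Hh.
  set (c := fun n => (Rabs d * gen_norm) ^ n / INR (fact n) * B).
  set (F := fun n => d ^ n / INR (fact n) * Nat.iter n gen_op (back_at k h) (x1, x2)).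
  assert (Ec : is_series c (exp (Rabs d * gen_norm) * B))
    by exact (is_series_scal_r B _ _ (exp_series _)).
  assert (HFc : forall n, Rabs (F n) <= c n)
    by (intro n; apply Rabs_exp_term_le, gen_iter_bound, back_at_bound, Hh).
  assert (Hcv : Un_cv (fun N => Series (fun n =>
                  d ^ n / INR (fact n) * Nat.iter n gen_op (back_at k (trunc N h)) (x1, x2)))
                  (Series F)).
  { apply (Un_cv_Series_dominated _ F c (Z.to_nat (x1 - k)) (ex_intro _ _ Ec)).
    - intros N n. apply Rabs_exp_term_le, gen_iter_bound, back_at_bound, trunc_bound, Hh.
    - intros N n HN. unfold F. rewrite gen_iter_back_at_trunc by assumption. reflexivity. }
  assert (HA : is_series (fun j => trans vf vb d (x1, x2) ((k + 1 + Z.of_nat j)%Z, k) * h j)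
                 (Series F)).
  { apply is_series_Reals. intros eps Heps. destruct (Hcv eps Heps) as [N0 HN0].
    exists N0. intros N HN. rewrite sum_trans_back_at. apply HN0, HN. }
  rewrite (is_series_unique _ _ HA). apply Series_correct.
  apply (ex_series_Rabs_le _ c HFc). exists (exp (Rabs d * gen_norm) * B). exact Ec.
Qed.

Lemma back_fdd_bounded l : exists B, forall a b, (b < a)%Z -> Rabs (back_fdd vf vb (a, b) l) <= B.
Proof.
  induction l as [|[d k] r [B HB]].
  - exists 1. intros a b _. simpl. rewrite Rabs_R1. lra.
  - exists (exp (Rabs d * gen_norm) * B). intros a b Hab. cbn [back_fdd].
    pose (h := fun j : nat => back_fdd vf vb ((k + 1 + Z.of_nat j)%Z, k) r).
    change (Rabs (Series (fun j => trans vf vb d (a, b) ((k + 1 + Z.of_nat j)%Z, k) * h j))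
            <= exp (Rabs d * gen_norm) * B).
    assert (Hh : forall j, Rabs (h j) <= B) by (intro j; apply HB; lia).
    rewrite <- (is_series_unique _ _ (is_series_trans_back_at d k h B a b Hab Hh)).
    apply (Rabs_Series_le _ (fun n => (Rabs d * gen_norm) ^ n / INR (fact n) * B)).
    + intro n. apply Rabs_exp_term_le, gen_iter_bound, back_at_bound, Hh.
    + exact (is_series_scal_r B _ _ (exp_series _)).
Qed.

End Generator.

(* [geom_mix p g u] is the mean of [u (min G g)] for [P(G = n) = (1 - p) p ^ n],
   see [is_series_geom_min]. *)
Fixpoint geom_mix (p : R) (g : nat) (u : nat -> R) : R :=
  match g with
  | O => u O
  | S g' => (1 - p) * u O + p * geom_mix p g' (fun m => u (S m))
  end.

Lemma geom_mix_ext p g : forall u v, (forall m, u m = v m) -> geom_mix p g u = geom_mix p g v.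
Proof.
  induction g as [|g IH]; intros u v Huv; simpl; rewrite Huv; [reflexivity|].
  rewrite (IH _ (fun m => v (S m))) by auto. reflexivity.
Qed.

Lemma geom_mix_const p g c : geom_mix p g (fun _ => c) = c.
Proof. induction g as [|g IH]; simpl; [reflexivity | rewrite IH; ring]. Qed.

Lemma geom_mix_scal p g : forall c u, geom_mix p g (fun m => c * u m) = c * geom_mix p g u.
Proof.
  induction g as [|g IH]; intros; simpl; [reflexivity|].
  rewrite (IH c (fun m => u (S m))). ring.
Qed.

Lemma geom_mix_lin3 p g : forall c1 c2 c3 u v w,
  geom_mix p g (fun m => c1 * u m + c2 * v m + c3 * w m)
  = c1 * geom_mix p g u + c2 * geom_mix p g v + c3 * geom_mix p g w.
Proof.
  induction g as [|g IH]; intros; simpl; [reflexivity|].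
  rewrite (IH c1 c2 c3 (fun m => u (S m)) (fun m => v (S m)) (fun m => w (S m))). ring.
Qed.

Lemma geom_mix_bound p g : 0 <= p <= 1 -> forall u B, (forall m, Rabs (u m) <= B) ->
  Rabs (geom_mix p g u) <= B.
Proof.
  intro Hp. induction g as [|g IH]; intros u B Hu; simpl; [apply Hu|].
  pose proof (IH (fun m => u (S m)) B (fun m => Hu (S m))). pose proof (Hu O).
  eapply Rle_trans; [apply Rabs_triang|].
  rewrite !Rabs_mult, (Rabs_pos_eq (1 - p)), (Rabs_pos_eq p) by lra.
  apply Rle_trans with ((1 - p) * B + p * B); [|lra].
  apply Rplus_le_compat; apply Rmult_le_compat_l; lra.
Qed.

Lemma geom_mix_is_series p g : forall (U : nat -> nat -> R) (V : nat -> R),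
  (forall m, is_series (U m) (V m)) ->
  is_series (fun n => geom_mix p g (fun m => U m n)) (geom_mix p g V).
Proof.
  induction g as [|g IH]; intros U V HUV; simpl; [apply HUV|].
  apply (is_series_plus _ _ _ _ (is_series_scal_l (1 - p) _ _ (HUV O))).
  exact (is_series_scal_l p _ _ (IH (fun m => U (S m)) (fun m => V (S m)) (fun m => HUV (S m)))).
Qed.

Lemma is_series_geom_min p : 0 <= p < 1 -> forall g u,
  is_series (fun n => (1 - p) * p ^ n * u (Nat.min n g)) (geom_mix p g u).
Proof.
  intros Hp g. induction g as [|g IH]; intro u.
  - replace (geom_mix p 0 u) with (((1 - p) * u O) * / (1 - p)) by (simpl; field; lra).
    assert (Hgeom : is_series (fun n => p ^ n) (/ (1 - p)))
      by (apply is_series_geom; rewrite Rabs_pos_eq; lra).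
    eapply is_series_ext; [|exact (is_series_scal_l ((1 - p) * u O) _ _ Hgeom)].
    intro n. change ((1 - p) * u O * p ^ n = (1 - p) * p ^ n * u (Nat.min n 0)).
    rewrite Nat.min_0_r. ring.
  - apply is_series_decr_1.
    replace (plus _ _) with (p * geom_mix p g (fun m => u (S m))) by (cbn; ring).
    eapply is_series_ext; [|exact (is_series_scal_l p _ _ (IH (fun m => u (S m))))].
    intro n. change (p * ((1 - p) * p ^ n * u (S (Nat.min n g)))
                     = (1 - p) * (p * p ^ n) * u (S (Nat.min n g))). ring.
Qed.

Definition gap_state (b : Z) (m : nat) : state := ((b + 1 + Z.of_nat m)%Z, b).

Lemma gap_state_of a b : (b < a)%Z -> (a, b) = gap_state b (Z.to_nat (a - b - 1)).
Proof. intro Hab. unfold gap_state. f_equal. lia. Qed.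

Definition link (p : R) (F : state -> R) (s : state) : R :=
  geom_mix p (Z.to_nat (fst s - snd s - 1)) (fun m => F (gap_state (snd s) m)).

Lemma link_gap p F b g : link p F (gap_state b g) = geom_mix p g (fun m => F (gap_state b m)).
Proof. unfold link, gap_state; cbn [fst snd]. f_equal. lia. Qed.

Lemma gen_op_gap vf vb F b m :
  gen_op vf vb F (gap_state b m) = vf * (F (gap_state b (S m)) - F (gap_state b m))
    + match m with O => 0 | S m' => vb * (F (gap_state (b + 1) m') - F (gap_state b m)) end.
Proof.
  unfold gap_state. rewrite gen_op_explicit.
  replace (b + 1 + Z.of_nat m + 1)%Z with (b + 1 + Z.of_nat (S m))%Z by lia.
  destruct m as [|m]; case_Z; [ring|].
  replace (b + 1 + 1 + Z.of_nat m)%Z with (b + 1 + Z.of_nat (S m))%Z by lia. reflexivity.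
Qed.

Lemma back_at_link p k H b g :
  back_at k (fun j => geom_mix p j H) (gap_state b g) = link p (back_at k H) (gap_state b g).
Proof.
  rewrite link_gap. unfold back_at, gap_state; cbn [fst snd].
  destruct (Z.eqb_spec b k) as [-> | Hb]; cbn [andb].
  - case_Z. replace (Z.to_nat (k + 1 + Z.of_nat g - k - 1)) with g by lia.
    apply geom_mix_ext. intro m. case_Z. f_equal. lia.
  - transitivity (geom_mix p g (fun _ => 0)); [symmetry; apply geom_mix_const|].
    apply geom_mix_ext. intro m. case_Z. reflexivity.
Qed.

Section Intertwining.

Variables a0 a1 : R.
Hypothesis a0_neq0 : a0 <> 0.

Lemma gen_op_link F b g :
  gen_op a0 a1 (link (a1 / a0) F) (gap_state b g) = link (a1 / a0) (gen_op a1 a0 F) (gap_state b g).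
Proof.
  set (p := a1 / a0). assert (Ha1 : a1 = p * a0) by (unfold p; field; exact a0_neq0).
  rewrite gen_op_gap, !link_gap, (geom_mix_ext _ _ _ _ (fun m => gen_op_gap a1 a0 F b m)).
  destruct g as [|g]; cbn [geom_mix].
  - rewrite Ha1. ring.
  - rewrite link_gap.
    rewrite (geom_mix_ext p g
      (fun m => a1 * (F (gap_state b (S (S m))) - F (gap_state b (S m)))
                + a0 * (F (gap_state (b + 1) m) - F (gap_state b (S m))))
      (fun m => a1 * F (gap_state b (S (S m))) + a0 * F (gap_state (b + 1) m)
                + (- (a1 + a0)) * F (gap_state b (S m)))) by (intro; ring).
    rewrite geom_mix_lin3, Ha1. ring.
Qed.

Lemma gen_iter_link n : forall F b g,
  Nat.iter n (gen_op a0 a1) (link (a1 / a0) F) (gap_state b g)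
  = link (a1 / a0) (Nat.iter n (gen_op a1 a0) F) (gap_state b g).
Proof.
  induction n as [|n IH]; intros F b g; [reflexivity|].
  rewrite !Nat.iter_succ_r, <- IH.
  apply (gen_iter_local _ _ n _ _ (b + 1 + Z.of_nat g + Z.of_nat n)%Z); [|lia|lia].
  intros x y Hxy _. rewrite (gap_state_of x y Hxy). apply gen_op_link.
Qed.

End Intertwining.

Lemma speed_ratio_bounds a0 a1 : 0 < a1 -> a1 < a0 -> 0 < a1 / a0 < 1.
Proof.
  intros Ha1 Ha0. split; [apply Rdiv_lt_0_compat; lra|].
  apply (Rmult_lt_reg_r a0); [lra|]. unfold Rdiv. rewrite Rmult_assoc, Rinv_l by lra. lra.
Qed.

Lemma back_fdd_gap a0 a1 l : 0 < a1 -> a1 < a0 -> forall b g,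
  back_fdd a0 a1 (gap_state b g) l
  = geom_mix (a1 / a0) g (fun m => back_fdd a1 a0 (gap_state b m) l).
Proof.
  intros Ha1 Ha0.
  assert (Hp : 0 <= a1 / a0 <= 1) by (pose proof (speed_ratio_bounds a0 a1 Ha1 Ha0); lra).
  induction l as [|[d k] r IH]; intros b g; [symmetry; apply (geom_mix_const (a1 / a0) g 1)|].
  change (gap_state b g) with ((b + 1 + Z.of_nat g)%Z, b). cbn [back_fdd].
  set (H := fun m => back_fdd a1 a0 (gap_state k m) r).
  destruct (back_fdd_bounded a1 a0 r) as [B HB].
  assert (HHB : forall m, Rabs (H m) <= B) by (intro m; unfold H, gap_state; apply HB; lia).
  rewrite (Series_ext _ (fun j =>
    trans a0 a1 d ((b + 1 + Z.of_nat g)%Z, b) ((k + 1 + Z.of_nat j)%Z, k) * geom_mix (a1 / a0) j H))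
    by (intro j; f_equal; exact (IH k j)).
  rewrite <- (is_series_unique _ _ (is_series_trans_back_at a0 a1 d k _ B (b + 1 + Z.of_nat g) b
    ltac:(lia) (fun j => geom_mix_bound (a1 / a0) j Hp H B HHB))).
  apply is_series_unique.
  eapply is_series_ext; [|apply geom_mix_is_series; intro m;
    exact (is_series_trans_back_at a1 a0 d k H B (b + 1 + Z.of_nat m) b ltac:(lia) HHB)].
  intro n. cbv beta. rewrite geom_mix_scal. f_equal.
  change (geom_mix (a1 / a0) g (fun m => Nat.iter n (gen_op a1 a0) (back_at k H) (gap_state b m))
    = Nat.iter n (gen_op a0 a1) (back_at k (fun j => geom_mix (a1 / a0) j H)) (gap_state b g)).
  rewrite <- link_gap, <- gen_iter_link by lra.
  apply (gen_iter_local _ _ n _ _ (b + 1 + Z.of_nat g + Z.of_nat n)%Z); [|unfold gap_state; lia..].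
  intros x y Hxy _. rewrite (gap_state_of x y Hxy). symmetry. apply back_at_link.
Qed.

Theorem theorem1p2 (a0 a1 : R) (x1 x2 : Z) :
  0 < a1 -> a1 < a0 -> (x2 < x1)%Z ->
  forall l : list (R * Z),
    List.Forall (fun p : R * Z => 0 <= fst p) l ->
    back_fdd a0 a1 (x1, x2) l =
    Series (fun g : nat =>
      (1 - a1 / a0) * (a1 / a0) ^ g
      * back_fdd a1 a0 ((x2 + 1 + Z.min (Z.of_nat g) (x1 - x2 - 1))%Z, x2) l).
Proof.
  intros Ha1 Ha0 Hx l _.
  rewrite (gap_state_of x1 x2 Hx), back_fdd_gap by assumption.
  symmetry. apply is_series_unique.
  eapply is_series_ext; [|apply is_series_geom_min].
  - intro n. unfold gap_state. do 3 f_equal. lia.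
  - pose proof (speed_ratio_bounds a0 a1 Ha1 Ha0). lra.
Qed.
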